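(* Let $E\subset\mathbb{R}^2$, let $E_o:=\{(x,y)\in E: x\neq y\}$, and let $C\subseteq E_o$ be connected in $E_o$. If uniqueness of portfolio positions holds at some point of $C$, then uniqueness of portfolio positions holds at all points of $C$. Likewise, if convergence of portfolio positions holds at some point of $C$, then convergence of portfolio positions holds at all points of $C$.
   Context: A semistatic strategy on $E$ is a function $v:E\to\mathbb{R}$ for which there exist $h,g:\mathbb{R}\to\mathbb{R}$ (a stock position $h$ and option position $g$) with $v(x,y)=h(x)(y-x)+g(y)$ for all $(x,y)\in E$; such a pair $(h,g)$ is called a portfolio position of $v$. Two points $(x,y),(x',y')\in E_o$ are connected if there exist $k\in\mathbb{N}_0$ and $(x_i,y_i)_{i=1}^k\in E_o^k$ such that all points of the list $(x,y),(x_1,y),(x_1,y_1),(x_2,y_1),\dots,(x_k,y_k),(x',y_k),(x',y')$ belong to $E_o$; a set $C\subseteq E_o$ is connected (in $E_o$) if any two of its points are connected. Uniqueness of portfolio positions holds at $(x,y)\in E$ if for every semistatic strategy $v$ on $E$, the values $h(x)$ and $g(y)$ are the same for all portfolio positions $(h,g)$ of $v$. In that situation, convergence of portfolio positions holds at $(x,y)$ if for any semistatic strategies $v_n$ on $E$ converging pointwise on $E$, with portfolio positions $(h_n,g_n)$, the sequences $h_n(x)$ and $g_n(y)$ converge. *)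

From Stdlib Require Import Reals List.
Open Scope R_scope.

Definition Eo (E : R -> R -> Prop) (x y : R) : Prop := E x y /\ x <> y.

Definition portfolio_position (E : R -> R -> Prop) (v : R -> R -> R)
  (h g : R -> R) : Prop :=
  forall x y, E x y -> v x y = h x * (y - x) + g y.

Definition semistatic (E : R -> R -> Prop) (v : R -> R -> R) : Prop :=
  exists h g : R -> R, portfolio_position E v h g.

(* chain E x y l x' y' : with l = [(x_1,y_1);...;(x_k,y_k)], all points of
   (x,y),(x_1,y),(x_1,y_1),(x_2,y_1),...,(x_k,y_k),(x',y_k),(x',y')
   belong to E_o. *)
Fixpoint chain (E : R -> R -> Prop) (x y : R) (l : list (R * R))
  (x' y' : R) : Prop :=
  match l with
  | nil => Eo E x y /\ Eo E x' y /\ Eo E x' y'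
  | (x1, y1) :: l' => Eo E x y /\ Eo E x1 y /\ chain E x1 y1 l' x' y'
  end.

Definition connected_pts (E : R -> R -> Prop) (x y x' y' : R) : Prop :=
  exists l : list (R * R), chain E x y l x' y'.

Definition connected_in_Eo (E C : R -> R -> Prop) : Prop :=
  (forall x y, C x y -> Eo E x y) /\
  (forall x y x' y', C x y -> C x' y' -> connected_pts E x y x' y').

Definition uniqueness_at (E : R -> R -> Prop) (x y : R) : Prop :=
  E x y /\
  forall v h g h' g', semistatic E v ->
    portfolio_position E v h g -> portfolio_position E v h' g' ->
    h x = h' x /\ g y = g' y.

(* convergence of portfolio positions at (x,y) (defined in the situation
   where uniqueness holds at (x,y)) *)
Definition convergence_at (E : R -> R -> Prop) (x y : R) : Prop :=
  uniqueness_at E x y /\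
  forall (v : nat -> R -> R -> R) (h g : nat -> R -> R),
    (forall n, semistatic E (v n)) ->
    (forall a b, E a b -> exists l, Un_cv (fun n => v n a b) l) ->
    (forall n, portfolio_position E (v n) (h n) (g n)) ->
    (exists l, Un_cv (fun n => h n x) l) /\ (exists l, Un_cv (fun n => g n y) l).

From Stdlib Require Import Reals List Lra.
Open Scope R_scope.

(* A portfolio position (h, g) of v is pinned down by v along the moves of a
   chain: at (a, b) in E the option position is g b = v a b - h a (b - a), and
   when moreover a <> b the stock position is h a = (v a b - g b) / (b - a).
   So knowing h a (or its limit) at (a, b) determines g b at every (a, b') in E,
   and knowing g b determines h a' at every (a', b) in E_o; walking along a
   chain of horizontal and vertical moves in E_o transports uniqueness and
   convergence from one point of C to any other. *)

Lemma Un_cv_ext (u w : nat -> R) (l : R) :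
  (forall n, u n = w n) -> Un_cv u l -> Un_cv w l.
Proof.
  intros Huw Hu eps Heps.
  destruct (Hu eps Heps) as [N HN].
  exists N; intros n Hn; rewrite <- Huw; auto.
Qed.

Lemma Un_cv_const (c : R) : Un_cv (fun _ => c) c.
Proof.
  intros eps Heps; exists 0%nat; intros n _.
  rewrite R_dist_eq; lra.
Qed.

Lemma Un_cv_scal_r (u : nat -> R) (l c : R) :
  Un_cv u l -> Un_cv (fun n => u n * c) (l * c).
Proof. intros Hu; apply CV_mult; [exact Hu | apply Un_cv_const]. Qed.

Section SemistaticPositions.

Variable E : R -> R -> Prop.

Lemma chain_Eo_start (l : list (R * R)) (x y x' y' : R) :
  chain E x y l x' y' -> Eo E x y.
Proof. destruct l as [| [x1 y1] l]; simpl; tauto. Qed.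

Lemma chain_transport (Q : R -> R -> Prop) :
  (forall a a' b, Q a b -> Eo E a' b -> Q a' b) ->
  (forall a b b', Q a b -> Eo E a b' -> Q a b') ->
  forall l x y x' y', chain E x y l x' y' -> Q x y -> Q x' y'.
Proof.
  intros Hrow Hcol l.
  induction l as [| [x1 y1] l IH]; simpl; intros x y x' y' Hchain HQ.
  - destruct Hchain as [_ [Hx'y Hx'y']].
    exact (Hcol _ _ _ (Hrow _ _ _ HQ Hx'y) Hx'y').
  - destruct Hchain as [_ [Hx1y Htail]].
    apply (IH x1 y1 x' y' Htail).
    exact (Hcol _ _ _ (Hrow _ _ _ HQ Hx1y) (chain_Eo_start _ _ _ _ _ Htail)).
Qed.

Lemma connected_in_Eo_transport (C Q : R -> R -> Prop) (x0 y0 x y : R) :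
  connected_in_Eo E C ->
  (forall l a b a' b', chain E a b l a' b' -> Q a b -> Q a' b') ->
  C x0 y0 -> Q x0 y0 -> C x y -> Eo E x y /\ Q x y.
Proof.
  intros [HC_Eo HC_conn] Hchain HC0 HQ0 HC.
  destruct (HC_conn x0 y0 x y HC0 HC) as [l Hl].
  split; [exact (HC_Eo x y HC) | exact (Hchain l x0 y0 x y Hl HQ0)].
Qed.

Lemma position_option_value (v : R -> R -> R) (h g : R -> R) (a b : R) :
  portfolio_position E v h g -> E a b -> g b = v a b - h a * (b - a).
Proof. intros Hpos Hab; rewrite (Hpos a b Hab); ring. Qed.

Lemma position_stock_value (v : R -> R -> R) (h g : R -> R) (a b : R) :
  portfolio_position E v h g -> Eo E a b -> h a = (v a b - g b) / (b - a).
Proof.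
  intros Hpos [Hab Hne]; rewrite (Hpos a b Hab).
  field; intros Heq; apply Hne; lra.
Qed.

Definition unique_positions (a b : R) : Prop :=
  forall v h g h' g', semistatic E v ->
    portfolio_position E v h g -> portfolio_position E v h' g' ->
    h a = h' a /\ g b = g' b.

Definition convergent_positions (a b : R) : Prop :=
  forall (v : nat -> R -> R -> R) (h g : nat -> R -> R),
    (forall n, semistatic E (v n)) ->
    (forall a b, E a b -> exists l, Un_cv (fun n => v n a b) l) ->
    (forall n, portfolio_position E (v n) (h n) (g n)) ->
    (exists l, Un_cv (fun n => h n a) l) /\ (exists l, Un_cv (fun n => g n b) l).

Lemma unique_positions_row (a a' b : R) :
  unique_positions a b -> Eo E a' b -> unique_positions a' b.
Proof.
  intros HU Ha'b v h g h' g' Hv Hpos Hpos'.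
  destruct (HU v h g h' g' Hv Hpos Hpos') as [_ Hg].
  split; [| exact Hg].
  rewrite (position_stock_value _ _ _ _ _ Hpos Ha'b),
          (position_stock_value _ _ _ _ _ Hpos' Ha'b), Hg.
  reflexivity.
Qed.

Lemma unique_positions_col (a b b' : R) :
  unique_positions a b -> Eo E a b' -> unique_positions a b'.
Proof.
  intros HU [Hab' _] v h g h' g' Hv Hpos Hpos'.
  destruct (HU v h g h' g' Hv Hpos Hpos') as [Hh _].
  split; [exact Hh |].
  rewrite (position_option_value _ _ _ _ _ Hpos Hab'),
          (position_option_value _ _ _ _ _ Hpos' Hab'), Hh.
  reflexivity.
Qed.

Lemma convergent_positions_row (a a' b : R) :
  convergent_positions a b -> Eo E a' b -> convergent_positions a' b.
Proof.
  intros HK Ha'b v h g Hv Hcv Hpos.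
  destruct (HK v h g Hv Hcv Hpos) as [_ [lg Hg]].
  split; [| exists lg; exact Hg].
  destruct (Hcv a' b (proj1 Ha'b)) as [lv Hlv].
  exists ((lv - lg) * / (b - a')).
  apply (Un_cv_ext (fun n => (v n a' b - g n b) * / (b - a'))).
  - intros n; symmetry; exact (position_stock_value _ _ _ _ _ (Hpos n) Ha'b).
  - apply Un_cv_scal_r, CV_minus; assumption.
Qed.

Lemma convergent_positions_col (a b b' : R) :
  convergent_positions a b -> Eo E a b' -> convergent_positions a b'.
Proof.
  intros HK [Hab' _] v h g Hv Hcv Hpos.
  destruct (HK v h g Hv Hcv Hpos) as [[lh Hh] _].
  split; [exists lh; exact Hh |].
  destruct (Hcv a b' Hab') as [lv Hlv].
  exists (lv - lh * (b' - a)).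
  apply (Un_cv_ext (fun n => v n a b' - h n a * (b' - a))).
  - intros n; symmetry; exact (position_option_value _ _ _ _ _ (Hpos n) Hab').
  - apply CV_minus, Un_cv_scal_r; assumption.
Qed.

Lemma unique_positions_chain (l : list (R * R)) (x y x' y' : R) :
  chain E x y l x' y' -> unique_positions x y -> unique_positions x' y'.
Proof. apply chain_transport; [apply unique_positions_row | apply unique_positions_col]. Qed.

Lemma convergent_positions_chain (l : list (R * R)) (x y x' y' : R) :
  chain E x y l x' y' -> convergent_positions x y -> convergent_positions x' y'.
Proof.
  apply chain_transport;
    [apply convergent_positions_row | apply convergent_positions_col].
Qed.

End SemistaticPositions.

Theorem lemma2p4 (E C : R -> R -> Prop) :
  connected_in_Eo E C ->
  ((exists x0 y0, C x0 y0 /\ uniqueness_at E x0 y0) ->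
     forall x y, C x y -> uniqueness_at E x y) /\
  ((exists x0 y0, C x0 y0 /\ convergence_at E x0 y0) ->
     forall x y, C x y -> convergence_at E x y).
Proof.
  intros HC; split.
  - intros [x0 [y0 [HC0 [_ HU0]]]] x y HCxy.
    destruct (connected_in_Eo_transport E C (unique_positions E) x0 y0 x y HC
                (unique_positions_chain E) HC0 HU0 HCxy) as [[HExy _] HU].
    split; assumption.
  - intros [x0 [y0 [HC0 [[_ HU0] HK0]]]] x y HCxy.
    destruct (connected_in_Eo_transport E C (unique_positions E) x0 y0 x y HC
                (unique_positions_chain E) HC0 HU0 HCxy) as [[HExy _] HU].
    destruct (connected_in_Eo_transport E C (convergent_positions E) x0 y0 x y HC
                (convergent_positions_chain E) HC0 HK0 HCxy) as [_ HK].
    split; [split |]; assumption.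
Qed.
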